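(* Let $G$ be an $n$-vertex graph and $k$ a positive integer such that for every two disjoint subsets $S,T\subseteq V(G)$ with $|S|=|T|=k$ there is an edge of $G$ between $S$ and $T$. Let $\mathcal{M}$ be a collection of pairwise disjoint pairs $\{x,y\}\subseteq V(G)$ (where $x=y$ is allowed). Then $G\cup\mathcal{M}$ contains an $\mathcal{M}$-alternating path which uses all but at most $2k-1$ of the pairs in $\mathcal{M}$.
   Context: $G\cup\mathcal{M}$ denotes the graph obtained from $G$ by adding the edge $xy$ for every pair $\{x,y\}\in\mathcal{M}$ with $x\ne y$. A path in $G\cup\mathcal{M}$ is $\mathcal{M}$-alternating if it is of the form $e_1f_1e_2f_2\dots e_lf_l$, where the $e_i$ are edges of $G$ and each $f_i$ is either an edge $xy$ with $\{x,y\}\in\mathcal{M}$, $x\ne y$, or a single vertex $x$ with $\{x,x\}\in\mathcal{M}$. A pair is used by the path if it appears as one of the $f_i$. *)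

From mathcomp Require Import all_boot.
Set Implicit Arguments. Unset Strict Implicit. Unset Printing Implicit Defensive.

(* A graph G on vertex set V : finType is a symmetric irreflexive relation e.
   A collection M of pairs is a {set {set V}}; the pair {x,y} is [set x; y],
   which is the singleton [set x] when x = y. *)

Definition pair_set (V : finType) (p : V * V) : {set V} := [set p.1; p.2].

(* Vertices visited by the segments f_1 ... f_l, where f_i is the pair
   (a_i, b_i): the M-edge a_i b_i if a_i != b_i, the single vertex a_i
   if a_i = b_i. *)
Definition seg_vertices (V : finType) (s : seq (V * V)) : seq V :=
  flatten [seq if p.1 == p.2 then [:: p.1] else [:: p.1; p.2] | p <- s].

(* The vertex sequence v0, a_1, (b_1), a_2, (b_2), ..., a_l, (b_l) is an
   M-alternating path e_1 f_1 ... e_l f_l in G \cup M with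
   e_1 = v0 a_1 and e_{i+1} = b_i a_{i+1} edges of G, and f_i = {a_i,b_i} in M,
   all vertices distinct. *)
Definition alt_path_from (V : finType) (e : rel V) (M : {set {set V}})
    (v0 : V) (s : seq (V * V)) : Prop :=
  [/\ all (fun p => pair_set p \in M) s,
      path (fun p q => e p.2 q.1) (v0, v0) s
    & uniq (v0 :: seg_vertices s)].

Definition alt_path (V : finType) (e : rel V) (M : {set {set V}})
    (s : seq (V * V)) : Prop :=
  s = [::] \/ exists v0 : V, alt_path_from e M v0 s.

Definition used_pairs (V : finType) (s : seq (V * V)) : {set {set V}} :=
  [set pair_set p | p in s].

From mathcomp Require Import all_boot zify.
Set Implicit Arguments. Unset Strict Implicit. Unset Printing Implicit Defensive.

(* Depth-first search on the pairs of M.  At every moment the pairs are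
   split into unvisited ones (S), dead ones (U) and those on the current
   alternating path, kept as a stack.  If the end vertex of the path has a
   G-neighbour y in an unvisited pair, that pair is pushed, entered at y;
   otherwise the last pair is popped and declared dead, its end vertex having
   no neighbour in any unvisited pair.  Each step decreases |S| - |U| by one,
   so at some moment |S| = |U|.  Then |S| < k: otherwise one vertex from each
   of k dead pairs and one from each of k unvisited pairs would give two
   disjoint k-sets with no edge between them.  The path on the stack, minus
   its first pair, misses at most |S| + |U| + 1 <= 2k - 1 pairs. *)

Lemma sorted_rcons_rcons (T : Type) (r : rel T) s x y :
  sorted r (rcons s x) -> r x y -> sorted r (rcons (rcons s x) y).
Proof.
case: s => [|z s] /=; first by move=> _ ->.
by rewrite !rcons_path last_rcons => -> ->.
Qed.

Section Blocks.
Variable T : finType.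
Implicit Types (A : {set T}) (F G P : {set {set T}}).

Lemma exists_subset_card A k : k <= #|A| -> exists2 B : {set T}, B \subset A & #|B| = k.
Proof.
case/card_geqP => s [uniq_s <- sA]; exists [set x in s].
  by apply/subsetP => x; rewrite inE => /sA.
by rewrite cardsE; apply/card_uniqP.
Qed.

Lemma trivIset_cover_mem P F A x :
  trivIset P -> F \subset P -> A \in P -> x \in A -> x \in cover F -> A \in F.
Proof.
move=> tiP /subsetP sFP PA Ax /bigcupP [B FB Bx].
by rewrite -(def_pblock tiP PA Ax) (def_pblock tiP (sFP _ FB) Bx).
Qed.

Lemma disjoint_cover P F G :
  trivIset P -> F \subset P -> G \subset P -> [disjoint F & G] ->
  [disjoint cover F & cover G].
Proof.
move=> tiP sFP sGP dFG; rewrite -setI_eq0; apply/eqP/setP => x; rewrite !inE.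
apply/negbTE/andP => -[/bigcupP [A FA Ax] Gx].
have PA : A \in P by apply: (subsetP sFP).
by have := trivIset_cover_mem tiP sGP PA Ax Gx; rewrite (disjointFr dFG FA).
Qed.

Lemma card_trivIset_meet F (p : pred T) :
  trivIset F -> {in F, forall A, exists2 x, x \in A & p x} ->
  #|F| <= #|[set x in cover F | p x]|.
Proof.
move=> tiF meet; apply: leq_trans (leq_imset_card (pblock F) _).
apply/subset_leq_card/subsetP => A FA; have [x Ax px] := meet A FA.
apply/imsetP; exists x; last by rewrite (def_pblock tiF FA Ax).
by rewrite inE px andbT; apply/bigcupP; exists A.
Qed.

Lemma trivIset_transversal F (p : pred T) k :
  trivIset F -> {in F, forall A, exists2 x, x \in A & p x} -> k <= #|F| ->
  exists X : {set T}, [/\ #|X| = k, X \subset cover F & {subset X <= p}].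
Proof.
move=> tiF meet leF.
have [X sX cardX] := exists_subset_card (leq_trans leF (card_trivIset_meet tiF meet)).
exists X; split=> //; first by apply: subset_trans sX _; apply/subsetP => x /setIdP [].
by move=> x /(subsetP sX) /setIdP [].
Qed.

End Blocks.

Section Segments.
Variable V : finType.
Implicit Types (p : V * V) (s t : seq (V * V)).

Lemma used_pairs_nil : used_pairs [::] = set0 :> {set {set V}}.
Proof. by apply/setP => f; rewrite inE; apply/imsetP => -[]. Qed.

Lemma used_pairs_cons p s : used_pairs (p :: s) = pair_set p |: used_pairs s.
Proof.
apply/setP => f; rewrite !inE; apply/imsetP/orP => [[q]|[/eqP ->|/imsetP [q qs ->]]].
- by rewrite inE => /orP [/eqP -> ->|qs ->]; [left|right; apply: imset_f].
- by exists p; rewrite ?inE ?eqxx.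
- by exists q; rewrite // inE qs orbT.
Qed.

Lemma used_pairs_cat s t : used_pairs (s ++ t) = used_pairs s :|: used_pairs t.
Proof.
elim: s => [|p s IH]; first by rewrite used_pairs_nil set0U.
by rewrite cat_cons !used_pairs_cons IH setUA.
Qed.

Lemma used_pairs_rcons s p : used_pairs (rcons s p) = used_pairs s :|: [set pair_set p].
Proof. by rewrite -cats1 used_pairs_cat used_pairs_cons used_pairs_nil setU0. Qed.

Lemma seg_vertices_cat s t : seg_vertices (s ++ t) = seg_vertices s ++ seg_vertices t.
Proof. by rewrite /seg_vertices map_cat flatten_cat. Qed.

Lemma mem_seg_vertices v s : (v \in seg_vertices s) = (v \in cover (used_pairs s)).
Proof.
elim: s => [|p s IH]; first by rewrite used_pairs_nil /cover big_set0 inE.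
rewrite used_pairs_cons /cover bigcup_setU -/(cover _) cover1 inE -IH /=.
by rewrite mem_cat /pair_set; case: eqP => [->|_]; rewrite !inE ?orbb.
Qed.

Lemma mem_seg_vertices1 v p : (v \in seg_vertices [:: p]) = (v \in pair_set p).
Proof. by rewrite mem_seg_vertices used_pairs_cons used_pairs_nil setU0 cover1. Qed.

Lemma uniq_seg_vertices1 p : uniq (seg_vertices [:: p]).
Proof. by rewrite /seg_vertices /=; case: eqP => //= /eqP; rewrite inE andbT. Qed.

Lemma pair_set_from (x y z : V) :
  z \in [set x; y] -> exists w, pair_set (z, w) = [set x; y].
Proof.
by rewrite !inE => /orP [] /eqP ->; [exists y | exists x; rewrite /pair_set setUC].
Qed.

End Segments.

Definition joined (V : finType) (e : rel V) (k : nat) :=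
  forall S T : {set V}, [disjoint S & T] -> #|S| = k -> #|T| = k ->
    exists x, exists y, [/\ x \in S, y \in T & e x y].

Section DepthFirstSearch.
Variables (V : finType) (e : rel V) (M : {set {set V}}).
Implicit Types (S U : {set {set V}}) (Q : seq (V * V)).

Definition seg_rel : rel (V * V) := fun p q => e p.2 q.1.

Definition isolated_from (A : {set V}) (b : V) := [forall y in A, ~~ e b y].

(* S: unvisited pairs, U: dead pairs, Q: the current path, read from the
   bottom of the stack to its top. *)
Record dfs_state S U Q : Prop := DfsState {
  dfs_partition : M = S :|: U :|: used_pairs Q;
  dfs_unvisited : [disjoint S & U :|: used_pairs Q];
  dfs_dead_unused : [disjoint U & used_pairs Q];
  dfs_sorted : sorted seg_rel Q;
  dfs_uniq : uniq (seg_vertices Q);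
  dfs_dead : forall u, u \in U -> exists2 b, b \in u & isolated_from (cover S) b
}.

Lemma dfs_state_sub S U Q :
  dfs_state S U Q -> [/\ S \subset M, U \subset M & used_pairs Q \subset M].
Proof.
by case=> -> *; split; apply/subsetP => f; rewrite !inE => ->; rewrite ?orbT.
Qed.

(* The first pair of the stack is dropped: an alternating path starts with
   an edge of G. *)
Lemma dfs_alt_path S U Q :
  dfs_state S U Q ->
  exists s, alt_path e M s /\ #|M :\: used_pairs s| <= (#|S| + #|U|).+1.
Proof.
move=> st; have [_ _ QM] := dfs_state_sub st.
case: Q st QM => [|b s] st QM.
  exists [::]; split; first by left.
  by rewrite used_pairs_nil setD0 (dfs_partition st) used_pairs_nil setU0 cardsU; lia.
exists s; split.
  right; exists b.2; split.
  - apply/allP => q qs; apply: (subsetP QM).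
    by rewrite used_pairs_cons inE; apply/orP; right; apply/imsetP; exists q.
  - by case: s st {QM} => [|q s] st //=; apply: (dfs_sorted st).
  - move: (dfs_uniq st); rewrite -cat1s seg_vertices_cat cat_uniq => /and3P [_ b2s uS].
    rewrite /= uS andbT; apply: contra b2s => b2s; apply/hasP; exists b.2 => //.
    by rewrite mem_seg_vertices1 !inE eqxx orbT.
apply: leq_trans (_ : #|S :|: U :|: [set pair_set b]| <= _); last first.
  by rewrite !cardsU cards1; lia.
apply/subset_leq_card/subsetP => f.
rewrite (dfs_partition st) used_pairs_cons !inE.
by case: (f \in used_pairs s); rewrite ?andbF ?orbF.
Qed.

Lemma dfs_init : dfs_state M set0 [::].
Proof.
split; rewrite ?used_pairs_nil ?setU0 //.
- by rewrite -setI_eq0 setI0.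
- by rewrite -setI_eq0 set0I.
- by move=> u; rewrite inE.
Qed.

Lemma dfs_pop S U Q p :
  dfs_state S U (rcons Q p) -> isolated_from (cover S) p.2 ->
  dfs_state S (pair_set p |: U) Q.
Proof.
case=> defM dS dU sQp uQp dead isop.
have sQ : sorted seg_rel Q by move: sQp; rewrite -cats1 => /cat_sorted2 [].
move: (uQp); rewrite -cats1 seg_vertices_cat cat_uniq => /and3P [uQ disjQp _].
have pQ : pair_set p \notin used_pairs Q.
  have p1p : p.1 \in pair_set p by rewrite !inE eqxx.
  apply: contra disjQp => pQ; apply/hasP; exists p.1; first by rewrite mem_seg_vertices1.
  by rewrite mem_seg_vertices; apply/bigcupP; exists (pair_set p).
have defUQ : (pair_set p |: U) :|: used_pairs Q = U :|: used_pairs (rcons Q p).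
  rewrite used_pairs_rcons; apply/setP => f; rewrite !inE.
  by case: (f == _); case: (f \in U); case: (f \in used_pairs Q).
split => //.
- by rewrite -(setUA S) defUQ setUA.
- by rewrite defUQ.
- rewrite disjoint_subset; apply/subsetP => f; rewrite !inE.
  case/orP => [/eqP -> //|fU].
  by move: (disjointFr dU fU); rewrite used_pairs_rcons inE => /norP [].
- move=> u /setU1P [->|/dead //]; exists p.2 => //.
  by rewrite /pair_set !inE eqxx orbT.
Qed.

Hypothesis tiM : trivIset M.

Lemma dfs_push S U Q s p :
  dfs_state S U Q -> s \in S -> pair_set p = s -> sorted seg_rel (rcons Q p) ->
  dfs_state (S :\ s) U (rcons Q p).
Proof.
move=> st Ss ps sQp; have [SM _ QM] := dfs_state_sub st.
case: st => defM dS dU _ uQ dead.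
have [sU sQ] : s \notin U /\ s \notin used_pairs Q.
  by move: (disjointFr dS Ss); rewrite inE => /norP.
have usedQp : used_pairs (rcons Q p) = used_pairs Q :|: [set s].
  by rewrite used_pairs_rcons ps.
split; rewrite ?usedQp //.
- rewrite defM; apply/setP => f; rewrite !inE.
  by case: (eqVneq f s) => [->|_]; rewrite /= ?Ss ?orbT ?orbF.
- rewrite disjoint_subset; apply/subsetP => f /setD1P [/negbTE fs fS].
  by rewrite !inE fs orbF -in_setU (disjointFr dS fS).
- rewrite disjoint_subset; apply/subsetP => f fU.
  by rewrite !inE (disjointFr dU fU); apply: contraNneq sU => <-.
- rewrite -cats1 seg_vertices_cat cat_uniq uQ uniq_seg_vertices1 andbT /=.
  apply/hasP => -[v]; rewrite mem_seg_vertices1 mem_seg_vertices ps => vs vQ.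
  by rewrite (trivIset_cover_mem tiM QM (subsetP SM _ Ss) vs vQ) in sQ.
- move=> u /dead [b ub isob]; exists b => //; apply/forall_inP => y.
  rewrite coverD1 ?inE => [/andP [_ yS]||//]; first exact: (forall_inP isob).
  exact: trivIsetS SM tiM.
Qed.

Hypothesis pairsM : forall f, f \in M -> exists x y : V, f = [set x; y].

Lemma dfs_step S U Q :
  dfs_state S U Q -> S != set0 ->
  exists S' U' Q', dfs_state S' U' Q' /\ #|U'| + #|S| = (#|U| + #|S'|).+1.
Proof.
move=> st /set0Pn [s0 Ss0]; have [SM _ _] := dfs_state_sub st.
have card_push s : s \in S -> #|U| + #|S| = (#|U| + #|S :\ s|).+1.
  by move=> Ss; rewrite (cardsD1 s S) Ss; lia.
case/lastP: Q st => [|Q [a b]] st.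
  have [x [y defs0]] := pairsM (subsetP SM _ Ss0).
  exists (S :\ s0), U, [:: (x, y)]; split; last exact: card_push.
  by apply: (dfs_push (Q := [::]) (p := (x, y)) st Ss0 (esym defs0)).
case: (boolP [exists y in cover S, e b y]) => [|isob].
  case/exists_inP => y /bigcupP [s Ss ys] eby.
  have [x [z defs]] := pairsM (subsetP SM _ Ss).
  rewrite defs in ys; have [w psw] := pair_set_from ys.
  exists (S :\ s), U, (rcons (rcons Q (a, b)) (y, w)); split; last exact: card_push.
  apply: (dfs_push st Ss); first by rewrite psw defs.
  by apply: (sorted_rcons_rcons (dfs_sorted st)); exact: eby.
have abU : pair_set (a, b) \notin U.
  by rewrite (disjointFl (dfs_dead_unused st)) // used_pairs_rcons !inE eqxx orbT.
exists S, (pair_set (a, b) |: U), Q; split; last by rewrite cardsU1 abU; lia.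
by apply: (dfs_pop st); rewrite /isolated_from -negb_exists_in.
Qed.

Lemma dfs_balanced : exists S U Q, dfs_state S U Q /\ #|S| = #|U|.
Proof.
suff run d S U Q : dfs_state S U Q -> #|U| + d = #|S| ->
    exists S' U' Q', dfs_state S' U' Q' /\ #|S'| = #|U'|.
  by apply: (run #|M| _ _ _ dfs_init); rewrite cards0.
elim: d S U Q => [|d IHd] S U Q st card_SU.
  by exists S, U, Q; rewrite -card_SU addn0.
have [|S' [U' [Q' [st' card_step]]]] := dfs_step st; first by rewrite -card_gt0; lia.
by apply: IHd st' _; lia.
Qed.

Lemma dfs_balanced_lt k S U Q :
  joined e k -> dfs_state S U Q -> #|S| = #|U| -> #|S| < k.
Proof.
move=> joinedk st card_SU; rewrite ltnNge; apply/negP => leS.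
have [SM UM _] := dfs_state_sub st.
have dUS : [disjoint U & S].
  by rewrite disjoint_sym; apply: disjointWr (dfs_unvisited st); apply: subsetUl.
have [X [cardX XU isoX]] : exists X : {set V},
    [/\ #|X| = k, X \subset cover U & {subset X <= isolated_from (cover S)}].
  by apply: trivIset_transversal (trivIsetS UM tiM) (dfs_dead st) _; rewrite -card_SU.
have [Y [cardY YS _]] : exists Y : {set V},
    [/\ #|Y| = k, Y \subset cover S & {subset Y <= predT}].
  apply: trivIset_transversal (trivIsetS SM tiM) _ leS.
  by move=> s /(subsetP SM) /pairsM [x [y ->]]; exists x; rewrite ?inE ?eqxx.
have [x [y [xX yY exy]]] :=
  joinedk X Y (disjointW XU YS (disjoint_cover tiM UM SM dUS)) cardX cardY.
by move: (isoX x xX) => /forall_inP /(_ y (subsetP YS y yY)); rewrite exy.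
Qed.

End DepthFirstSearch.

Theorem lemma3p17 (n : nat) (V : finType) (e : rel V) (k : nat) (M : {set {set V}}) :
  #|V| = n ->
  symmetric e -> irreflexive e ->
  0 < k ->
  (forall S T : {set V}, [disjoint S & T] -> #|S| = k -> #|T| = k ->
     exists x, exists y, [/\ x \in S, y \in T & e x y]) ->
  (forall f, f \in M -> exists x y : V, f = [set x; y]) ->
  (forall f g, f \in M -> g \in M -> f != g -> [disjoint f & g]) ->
  exists s : seq (V * V),
    alt_path e M s /\ #|M :\: used_pairs s| <= 2 * k - 1.
Proof.
move=> _ _ _ _ joinedk pairsM disjM.
have tiM : trivIset M by apply/trivIsetP => f g fM gM; apply: disjM.
have [S [U [Q [st card_SU]]]] := dfs_balanced e tiM pairsM.
have ltSk := dfs_balanced_lt tiM pairsM joinedk st card_SU.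
have [s [alt_s card_s]] := dfs_alt_path st.
by exists s; split => //; lia.
Qed.
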